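(* Let $\Gamma$ be a chain of loops: vertices $w_0,\dots,w_r$ where consecutive vertices $w_{j-1},w_j$ are joined by two parallel edges of equal length, so that the $j$-th loop has length $\lambda_j$. Suppose the distinct loop lengths occurring are $L_1,\dots,L_m$, with $L_i$ occurring $n_i$ times, and let $L=\sum_j\lambda_j$ be the total length. Then the eigenfrequencies $k$ (eigenvalues $k^2$) of $\mathbf{L}(\Gamma)$ with standard vertex conditions are: $0$ with multiplicity one; $2\pi N/L$ with multiplicity one for each positive integer $N$; and $2\pi N/L_i$ with multiplicity $n_i$ for each $i$ and each positive integer $N$ (multiplicities adding when these values coincide). Equivalently the secular equation is $\Sigma(k)=\left(-1+e^{ikL}\right)\prod_{i=1}^m\left(-1+e^{iL_ik}\right)^{n_i}$. In particular the spectrum does not depend on the order of the loops in the chain. *)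

From Stdlib Require Import Reals Lra List ClassicalEpsilon.
From Coquelicot Require Import Coquelicot.
Open Scope R_scope.

Definition rsum (d : nat) (g : nat -> R) : R :=
  fold_right Rplus 0 (map g (seq 0 d)).

Definition nsum (d : nat) (g : nat -> nat) : nat :=
  fold_right Nat.add 0%nat (map g (seq 0 d)).

Definition ind (P : Prop) : nat :=
  if excluded_middle_informative P then 1%nat else 0%nat.

(* Vertices w_0,...,w_r; loop j joins w_j and w_(j+1) by two parallel edges
   (j,true) and (j,false), each of length lam j / 2, parametrised by
   x in [0, lam j / 2] with x = 0 at w_j and x = lam j / 2 at w_(j+1).
   A function on the graph is f : nat -> bool -> R -> R, f j a being the
   function on edge (j,a). *)
Definition elen (lam : nat -> R) (j : nat) : R := lam j / 2.

Definition edge_eig (mu l : R) (g : R -> R) (d0 d1 : R) : Prop :=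
  (forall x, 0 < x < l ->
     ex_derive g x /\ ex_derive (Derive g) x /\
     - Derive (Derive g) x = mu * g x) /\
  filterlim g (at_right 0) (locally (g 0)) /\
  filterlim g (at_left l) (locally (g l)) /\
  filterlim (Derive g) (at_right 0) (locally d0) /\
  filterlim (Derive g) (at_left l) (locally d1).

(* f is a solution of the eigenvalue problem  -f'' = mu f  with standard
   vertex conditions (f = 0 is allowed; eigenvectors are the nonzero ones). *)
Definition is_eigfun (r : nat) (lam : nat -> R) (mu : R)
    (f : nat -> bool -> R -> R) : Prop :=
  exists D0 D1 : nat -> bool -> R,
    (forall j a, (j < r)%nat -> edge_eig mu (elen lam j) (f j a) (D0 j a) (D1 j a)) /\
    (forall j a b, (j < r)%nat ->
        f j a 0 = f j b 0 /\ f j a (elen lam j) = f j b (elen lam j)) /\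
    (forall j a b, (S j < r)%nat -> f j a (elen lam j) = f (S j) b 0) /\
    (* Kirchhoff: sum of outgoing derivatives vanishes at each vertex w_v *)
    (forall v, (v <= r)%nat ->
        (if Nat.ltb v r then D0 v true + D0 v false else 0)
        - (if Nat.ltb 0 v then D1 (pred v) true + D1 (pred v) false else 0) = 0).

Definition indep (r : nat) (lam : nat -> R) (d : nat)
    (F : nat -> nat -> bool -> R -> R) : Prop :=
  forall c : nat -> R,
    (forall j a x, (j < r)%nat -> 0 <= x <= elen lam j ->
        rsum d (fun i => c i * F i j a x) = 0) ->
    forall i, (i < d)%nat -> c i = 0.

(* mu is an eigenvalue of multiplicity d (d = 0: not an eigenvalue), i.e. the
   solution space has dimension exactly d. *)
Definition has_mult (r : nat) (lam : nat -> R) (mu : R) (d : nat) : Prop :=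
  (exists F, (forall i, (i < d)%nat -> is_eigfun r lam mu (F i)) /\ indep r lam d F) /\
  (forall F, (forall i, (i < S d)%nat -> is_eigfun r lam mu (F i)) ->
     ~ indep r lam (S d) F).

Definition pred_mult (r : nat) (lam : nat -> R) (k : R) : nat :=
  Nat.add (Nat.add (ind (k = 0))
     (ind (exists N : nat, (1 <= N)%nat /\ k * rsum r lam = 2 * PI * INR N)))
   (nsum r (fun j => ind (exists N : nat, (1 <= N)%nat /\ k * lam j = 2 * PI * INR N))).

From Pilot Require Import Defs.
From Stdlib Require Import Reals.
From Coquelicot Require Import Coquelicot.
From Stdlib Require Import Lra Lia List ClassicalEpsilon Classical FunctionalExtensionality ZArith.
(* [Defs.ind] must take precedence over [Rtopology.ind] from the Reals library. *)
Import Defs.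
Open Scope R_scope.

(** On each edge an eigenfunction of [-f'' = mu f] is a combination of a
    fundamental system [c], [s]; continuity and Kirchhoff's law propagate
    along the chain and show that every eigenfunction is [alpha c(position)]
    plus, on each loop, an antisymmetric multiple of [s] vanishing at the
    loop ends, with [alpha c'(L/2) = 0] at the last vertex.  For [mu < 0]
    ([c = cosh], [s = sinh]) this forces [f = 0].  For [mu = k^2 >= 0] it
    shows that the "active" modes -- the global mode [cos (k position)] when
    [k = 0] or [k L] is a positive multiple of [2 pi], and the loop modes
    [+-sin (k x)] on loop [j] when [k lam j] is one -- span the eigenspace; they are
    independent, so by a Steinitz-type count the multiplicity is their
    number, which is [pred_mult]. *)

(** * Local analysis on one edge *)

(** Points of [(0,l)] are eventually reached when approaching [0] from the
    right or [l] from the left; this lets interior identities pass to the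
    endpoints. *)
Lemma at_right_open_interval l : 0 < l -> at_right 0 (fun x => 0 < x < l).
Proof.
  intros Hl. exists (mkposreal l Hl). intros y Hy Hy0. simpl in Hy.
  unfold ball in Hy; simpl in Hy; unfold AbsRing_ball, abs, minus, plus, opp in Hy; simpl in Hy.
  apply Rabs_lt_between in Hy. lra.
Qed.

Lemma at_left_open_interval l : 0 < l -> at_left l (fun x => 0 < x < l).
Proof.
  intros Hl. exists (mkposreal l Hl). intros y Hy Hy0. simpl in Hy.
  unfold ball in Hy; simpl in Hy; unfold AbsRing_ball, abs, minus, plus, opp in Hy; simpl in Hy.
  apply Rabs_lt_between in Hy. lra.
Qed.

Lemma zero_derive_constant (F : R -> R) a b :
  (forall t, a < t < b -> is_derive F t 0) ->
  forall x y, a < x < b -> a < y < b -> F x = F y.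
Proof.
  intros HD x y Hx Hy. destruct (Rtotal_order x y) as [H|[H|H]].
  - apply eq_is_derive; [intros t Ht; apply HD; lra | exact H].
  - subst; reflexivity.
  - symmetry; apply eq_is_derive; [intros t Ht; apply HD; lra | exact H].
Qed.

Lemma is_derive_replace (f : R -> R) x l l' : is_derive f x l -> l = l' -> is_derive f x l'.
Proof. intros H ->; exact H. Qed.

Lemma derivable_cont_right (h : R -> R) x :
  ex_derive h x -> filterlim h (at_right x) (locally (h x)).
Proof.
  intros H. eapply filterlim_filter_le_1;
    [apply filter_le_within | apply (ex_derive_continuous h x H)].
Qed.

Lemma derivable_cont_left (h : R -> R) x :
  ex_derive h x -> filterlim h (at_left x) (locally (h x)).
Proof.
  intros H. eapply filterlim_filter_le_1;
    [apply filter_le_within | apply (ex_derive_continuous h x H)].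
Qed.

Lemma boundary_limit_right (g h : R -> R) l v :
  0 < l -> ex_derive h 0 -> (forall x, 0 < x < l -> h x = g x) ->
  filterlim g (at_right 0) (locally v) -> v = h 0.
Proof.
  intros Hl Dh Hgh Hg. apply (@filterlim_locally_unique _ _ _ (at_right 0) _ g); [exact Hg|].
  apply (filterlim_ext_loc h g); [|apply derivable_cont_right, Dh].
  eapply filter_imp; [|apply (at_right_open_interval l Hl)]. exact Hgh.
Qed.

Lemma boundary_limit_left (g h : R -> R) l v :
  0 < l -> ex_derive h l -> (forall x, 0 < x < l -> h x = g x) ->
  filterlim g (at_left l) (locally v) -> v = h l.
Proof.
  intros Hl Dh Hgh Hg. apply (@filterlim_locally_unique _ _ _ (at_left l) _ g); [exact Hg|].
  apply (filterlim_ext_loc h g); [|apply derivable_cont_left, Dh].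
  eapply filter_imp; [|apply (at_left_open_interval l Hl)]. exact Hgh.
Qed.

Lemma edge_eig_of_global (mu l : R) (g g1 : R -> R) :
  (forall x, is_derive g x (g1 x)) -> (forall x, is_derive g1 x (- mu * g x)) ->
  edge_eig mu l g (g1 0) (g1 l).
Proof.
  intros dg dg1.
  assert (E : Derive g = g1)
    by (apply functional_extensionality; intros x; apply is_derive_unique, dg).
  assert (Ex : forall x, ex_derive g x) by (intros x; exists (g1 x); apply dg).
  assert (Ex1 : forall x, ex_derive g1 x) by (intros x; exists (- mu * g x); apply dg1).
  split; [|split; [|split; [|split]]]; rewrite ?E.
  - intros x _. split; [apply Ex|split; [apply Ex1|]].
    rewrite (is_derive_unique _ _ _ (dg1 x)). ring.
  - apply derivable_cont_right, Ex.
  - apply derivable_cont_left, Ex.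
  - apply derivable_cont_right, Ex1.
  - apply derivable_cont_left, Ex1.
Qed.

Section FundamentalSystem.

Variables (mu : R) (c c1 s s1 : R -> R).
Hypotheses (dc : forall x, is_derive c x (c1 x)) (dc1 : forall x, is_derive c1 x (- mu * c x))
  (ds : forall x, is_derive s x (s1 x)) (ds1 : forall x, is_derive s1 x (- mu * s x))
  (wronskian : forall x, c x * s1 x - c1 x * s x = 1)
  (c_0 : c 0 = 1) (s_0 : s 0 = 0) (c1_0 : c1 0 = 0) (s1_0 : s1 0 = 1).

Lemma combination_derivable A B x : ex_derive (fun y => A * c y + B * s y) x.
Proof.
  exists (A * c1 x + B * s1 x).
  exact (is_derive_plus (fun y => A * c y) (fun y => B * s y) x _ _
           (is_derive_scal c x A _ (dc x)) (is_derive_scal s x B _ (ds x))).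
Qed.

Lemma combination_derivative_derivable A B x : ex_derive (fun y => A * c1 y + B * s1 y) x.
Proof.
  exists (A * (- mu * c x) + B * (- mu * s x)).
  exact (is_derive_plus (fun y => A * c1 y) (fun y => B * s1 y) x _ _
           (is_derive_scal c1 x A _ (dc1 x)) (is_derive_scal s1 x B _ (ds1 x))).
Qed.

(** Inside the edge a solution is a combination of [c] and [s]: the
    Wronskians [W(g,s)] and [W(c,g)] are constant and give the coefficients. *)
Lemma solution_interior_combination l g d0 d1 :
  0 < l -> edge_eig mu l g d0 d1 ->
  exists A B, forall x, 0 < x < l ->
    A * c x + B * s x = g x /\ A * c1 x + B * s1 x = Derive g x.
Proof.
  intros Hl [Hode _].
  set (Q := fun x => g x * s1 x - Derive g x * s x).
  set (P := fun x => Derive g x * c x - g x * c1 x).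
  assert (HQ : forall t, 0 < t < l -> is_derive Q t 0).
  { intros t Ht. destruct (Hode t Ht) as [e1 [e2 e3]].
    eapply is_derive_replace.
    - exact (is_derive_minus _ _ t _ _
        (is_derive_mult g s1 t _ _ (Derive_correct _ _ e1) (ds1 t) Rmult_comm)
        (is_derive_mult (Derive g) s t _ _ (Derive_correct _ _ e2) (ds t) Rmult_comm)).
    - unfold minus, plus, opp, mult; simpl.
      assert (Derive (Derive g) t = - (mu * g t)) as -> by lra. ring. }
  assert (HP : forall t, 0 < t < l -> is_derive P t 0).
  { intros t Ht. destruct (Hode t Ht) as [e1 [e2 e3]].
    eapply is_derive_replace.
    - exact (is_derive_minus _ _ t _ _
        (is_derive_mult (Derive g) c t _ _ (Derive_correct _ _ e2) (dc t) Rmult_comm)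
        (is_derive_mult g c1 t _ _ (Derive_correct _ _ e1) (dc1 t) Rmult_comm)).
    - unfold minus, plus, opp, mult; simpl.
      assert (Derive (Derive g) t = - (mu * g t)) as -> by lra. ring. }
  assert (Hm : 0 < l / 2 < l) by lra.
  exists (Q (l / 2)), (P (l / 2)). intros x Hx.
  rewrite (zero_derive_constant Q 0 l HQ _ x Hm Hx), (zero_derive_constant P 0 l HP _ x Hm Hx).
  unfold Q, P. split.
  - transitivity (g x * (c x * s1 x - c1 x * s x)); [ring | rewrite wronskian; ring].
  - transitivity (Derive g x * (c x * s1 x - c1 x * s x)); [ring | rewrite wronskian; ring].
Qed.

Lemma edge_solution_formula l g d0 d1 :
  0 < l -> edge_eig mu l g d0 d1 ->
  (forall x, 0 <= x <= l -> g x = g 0 * c x + d0 * s x) /\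
  d1 = g 0 * c1 l + d0 * s1 l.
Proof.
  intros Hl He.
  destruct (solution_interior_combination l g d0 d1 Hl He) as [A [B Hrep]].
  destruct He as [_ [Hg0 [Hgl [Hd0 Hd1]]]].
  assert (HA : g 0 = A).
  { rewrite (boundary_limit_right g _ l _ Hl (combination_derivable A B 0)
              (fun x Hx => proj1 (Hrep x Hx)) Hg0), c_0, s_0. ring. }
  assert (HB : d0 = B).
  { rewrite (boundary_limit_right (Derive g) _ l _ Hl (combination_derivative_derivable A B 0)
              (fun x Hx => proj2 (Hrep x Hx)) Hd0), c1_0, s1_0. ring. }
  rewrite HA, HB. split.
  - intros x Hx.
    destruct (Req_dec x 0) as [->|Hx0]; [rewrite c_0, s_0, HA; ring|].
    destruct (Req_dec x l) as [->|Hxl].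
    + exact (boundary_limit_left g _ l _ Hl (combination_derivable A B l)
               (fun x Hx => proj1 (Hrep x Hx)) Hgl).
    + symmetry; apply Hrep; lra.
  - exact (boundary_limit_left (Derive g) _ l _ Hl (combination_derivative_derivable A B l)
             (fun x Hx => proj2 (Hrep x Hx)) Hd1).
Qed.

End FundamentalSystem.

Lemma fold_Rplus_acc (l : list R) a : fold_right Rplus a l = fold_right Rplus 0 l + a.
Proof. induction l; simpl; [ring | rewrite IHl; ring]. Qed.

Lemma rsum_O g : rsum 0 g = 0.
Proof. reflexivity. Qed.

Lemma rsum_S n g : rsum (S n) g = rsum n g + g n.
Proof.
  unfold rsum. rewrite seq_S, map_app, fold_right_app. simpl.
  rewrite fold_Rplus_acc. ring.
Qed.

Lemma rsum_shift n g : rsum (S n) g = g 0%nat + rsum n (fun i => g (S i)).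
Proof.
  induction n; [unfold rsum; simpl; ring|].
  rewrite rsum_S, IHn, rsum_S. ring.
Qed.

Lemma rsum_ext n f g : (forall i, (i < n)%nat -> f i = g i) -> rsum n f = rsum n g.
Proof.
  induction n; intros H; [reflexivity|]. rewrite !rsum_S, IHn, H; [reflexivity|lia|].
  intros; apply H; lia.
Qed.

Lemma rsum_plus n f g : rsum n (fun i => f i + g i) = rsum n f + rsum n g.
Proof. induction n; [unfold rsum; simpl; ring|]. rewrite !rsum_S, IHn; ring. Qed.

Lemma rsum_minus n f g : rsum n (fun i => f i - g i) = rsum n f - rsum n g.
Proof. induction n; [unfold rsum; simpl; ring|]. rewrite !rsum_S, IHn; ring. Qed.

Lemma rsum_scal n a f : rsum n (fun i => a * f i) = a * rsum n f.
Proof. induction n; [unfold rsum; simpl; ring|]. rewrite !rsum_S, IHn; ring. Qed.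

Lemma rsum_scal_r n a f : rsum n (fun i => f i * a) = rsum n f * a.
Proof. rewrite (rsum_ext n _ (fun i => a * f i)) by (intros; ring). rewrite rsum_scal; ring. Qed.

Lemma rsum_zero n f : (forall i, (i < n)%nat -> f i = 0) -> rsum n f = 0.
Proof.
  induction n; intros H; [reflexivity|]. rewrite rsum_S, IHn, H; [ring|lia|].
  intros; apply H; lia.
Qed.

Lemma rsum_single n f i0 :
  (i0 < n)%nat -> (forall i, (i < n)%nat -> i <> i0 -> f i = 0) -> rsum n f = f i0.
Proof.
  induction n; intros Hi H; [lia|]. rewrite rsum_S.
  destruct (Nat.eq_dec i0 n) as [->|Hne].
  - rewrite rsum_zero; [ring|]. intros i Hi'; apply H; lia.
  - rewrite IHn, (H n); [ring|lia|lia|lia|]. intros i Hi' Hne'; apply H; lia.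
Qed.

Lemma rsum_swap n m (g : nat -> nat -> R) :
  rsum n (fun i => rsum m (fun t => g i t)) = rsum m (fun t => rsum n (fun i => g i t)).
Proof.
  induction n.
  - symmetry; apply rsum_zero; intros; reflexivity.
  - rewrite rsum_S, IHn, <- rsum_plus. apply rsum_ext; intros; rewrite rsum_S; reflexivity.
Qed.

Lemma rsum_pos r (g : nat -> R) :
  (0 < r)%nat -> (forall j, (j < r)%nat -> 0 < g j) -> 0 < rsum r g.
Proof.
  induction r; intros Hr Hg; [lia|]. rewrite rsum_S.
  destruct r; [rewrite rsum_O; specialize (Hg 0%nat ltac:(lia)); lra|].
  specialize (IHr ltac:(lia) ltac:(intros; apply Hg; lia)). specialize (Hg (S r) ltac:(lia)). lra.
Qed.

Lemma nsum_S n g : nsum (S n) g = (nsum n g + g n)%nat.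
Proof.
  unfold nsum. rewrite seq_S, map_app, fold_right_app. simpl.
  generalize (map g (seq 0 n)). intros l. induction l; simpl; lia.
Qed.

Lemma nsum_shift n g : nsum (S n) g = (g 0%nat + nsum n (fun i => g (S i)))%nat.
Proof.
  induction n; [unfold nsum; simpl; lia|].
  rewrite nsum_S, IHn, nsum_S. lia.
Qed.

Lemma nsum_ext n f g : (forall i, (i < n)%nat -> f i = g i) -> nsum n f = nsum n g.
Proof.
  induction n; intros H; [reflexivity|]. rewrite !nsum_S, IHn, H; [reflexivity|lia|].
  intros; apply H; lia.
Qed.

Lemma ind_true (P : Prop) : P -> ind P = 1%nat.
Proof. intros H; unfold ind; destruct excluded_middle_informative; tauto. Qed.

Lemma ind_false (P : Prop) : ~ P -> ind P = 0%nat.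
Proof. intros H; unfold ind; destruct excluded_middle_informative; tauto. Qed.

Lemma ind_or (P Q : Prop) : ~ (P /\ Q) -> ind (P \/ Q) = (ind P + ind Q)%nat.
Proof.
  intros H. unfold ind.
  destruct (excluded_middle_informative (P \/ Q)); destruct (excluded_middle_informative P);
  destruct (excluded_middle_informative Q); tauto || reflexivity.
Qed.

Lemma count_all n : nsum n (fun _ => ind True) = n.
Proof. induction n; [reflexivity|]. rewrite nsum_S, IHn, ind_true; [lia|exact I]. Qed.

Lemma count_remove (K : nat -> Prop) n i0 : (i0 < n)%nat -> K i0 ->
  (nsum n (fun i => ind (K i /\ i <> i0)) + 1 = nsum n (fun i => ind (K i)))%nat.
Proof.
  induction n; intros Hi HK; [lia|]. rewrite !nsum_S.
  destruct (Nat.eq_dec i0 n) as [->|Hne].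
  - rewrite (ind_false (K n /\ n <> n)), (ind_true (K n)) by tauto.
    rewrite (nsum_ext n (fun i => ind (K i /\ i <> n)) (fun i => ind (K i))); [lia|].
    intros i Hi'. destruct (classic (K i)).
    + rewrite !ind_true by (try split; auto; lia). reflexivity.
    + rewrite !ind_false by tauto. reflexivity.
  - rewrite <- IHn by (auto; lia).
    destruct (classic (K n)) as [Kn|Kn].
    + rewrite (ind_true (K n /\ n <> i0)), (ind_true (K n)) by auto. lia.
    + rewrite (ind_false (K n /\ n <> i0)), (ind_false (K n)) by tauto. lia.
Qed.

Lemma count_pos (K : nat -> Prop) n : (0 < nsum n (fun i => ind (K i)))%nat ->
  exists i, (i < n)%nat /\ K i.
Proof.
  induction n; intros H; [unfold nsum in H; simpl in H; lia|].
  rewrite nsum_S in H. destruct (classic (K n)) as [Hk|Hk]; [exists n; split; auto|].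
  rewrite (ind_false _ Hk) in H. destruct IHn as [i [Hi Ki]]; [lia|]. exists i; split; auto.
Qed.

Lemma enumerate_count (Act : nat -> Prop) M : exists sg : nat -> nat,
  (forall i, (i < nsum M (fun t => ind (Act t)))%nat -> (sg i < M)%nat /\ Act (sg i)) /\
  (forall i i', (i < nsum M (fun t => ind (Act t)))%nat ->
     (i' < nsum M (fun t => ind (Act t)))%nat -> sg i = sg i' -> i = i').
Proof.
  induction M as [|M [sg [H1 H2]]].
  - exists (fun i => i). unfold nsum; simpl. split; intros; lia.
  - destruct (classic (Act M)) as [HA|HA].
    + set (d := nsum M (fun t => ind (Act t))) in *.
      exists (fun i => if Nat.eq_dec i d then M else sg i).
      rewrite nsum_S, (ind_true _ HA). fold d. split.
      * intros i Hi. destruct Nat.eq_dec; [split; auto; lia|].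
        destruct (H1 i); [lia|split; auto; lia].
      * intros i i' Hi Hi'. destruct Nat.eq_dec; destruct Nat.eq_dec; try lia.
        -- intros E. destruct (H1 i'); lia.
        -- intros E. destruct (H1 i); lia.
        -- apply H2; lia.
    + exists sg. rewrite nsum_S, (ind_false _ HA), Nat.add_0_r. split.
      * intros i Hi. destruct (H1 i Hi); split; auto.
      * exact H2.
Qed.

(** * Linear algebra: a dimension count

    Vectors are families [e i : nat -> R] of coordinates [e i t], [t < M]. *)

Lemma relation_extend n (e : nat -> nat -> R) (K : nat -> Prop) M c :
  (forall i, ~ K i -> c i = 0) -> (forall i, (i < n)%nat -> K i -> e i M = 0) ->
  (forall t, (t < M)%nat -> rsum n (fun i => c i * e i t) = 0) ->
  forall t, (t < S M)%nat -> rsum n (fun i => c i * e i t) = 0.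
Proof.
  intros Hc He Hrel t Ht. destruct (Nat.eq_dec t M) as [->|Hne]; [|apply Hrel; lia].
  apply rsum_zero; intros i Hi. destruct (classic (K i)) as [Ki|Ki].
  - rewrite He; [ring|auto|auto].
  - rewrite Hc; [ring|auto].
Qed.

(** Gaussian elimination step: a relation among the vectors
    [e i - (e i M / e i0 M) e i0] (which have zero [M]-th coordinate) lifts,
    by correcting the coefficient of the pivot [i0], to a relation among
    the [e i] on the first [M+1] coordinates. *)
Lemma pivot_lift n (e : nat -> nat -> R) i0 M c' :
  (i0 < n)%nat -> e i0 M <> 0 ->
  (forall t, (t < M)%nat ->
     rsum n (fun i => c' i * (e i t - e i M / e i0 M * e i0 t)) = 0) ->
  exists c, (forall i, i <> i0 -> c i = c' i) /\
    forall t, (t < S M)%nat -> rsum n (fun i => c i * e i t) = 0.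
Proof.
  intros Hi0 Hp Hrel. set (p := e i0 M) in *.
  set (sv := rsum n (fun i => c' i * e i M) / p).
  exists (fun i => c' i - (if Nat.eq_dec i i0 then sv else 0)). split.
  - intros i Hne. destruct Nat.eq_dec; [tauto|ring].
  - intros t Ht.
    assert (Hsplit : rsum n (fun i => (c' i - (if Nat.eq_dec i i0 then sv else 0)) * e i t)
                     = rsum n (fun i => c' i * e i t) - sv * e i0 t).
    { assert (Hs : rsum n (fun i => (if Nat.eq_dec i i0 then sv else 0) * e i t) = sv * e i0 t).
      { rewrite (rsum_single n _ i0 Hi0).
        - destruct Nat.eq_dec; [reflexivity|tauto].
        - intros i Hi Hne; destruct Nat.eq_dec; [tauto|ring]. }
      rewrite <- Hs, <- rsum_minus. apply rsum_ext; intros; ring. }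
    rewrite Hsplit. destruct (Nat.eq_dec t M) as [->|Hne].
    + unfold sv, Rdiv. rewrite Rmult_assoc, Rinv_l; [ring|exact Hp].
    + specialize (Hrel t ltac:(lia)).
      rewrite (rsum_ext n _ (fun i => c' i * e i t - (e i0 t / p) * (c' i * e i M))) in Hrel
        by (intros; unfold Rdiv; ring).
      rewrite rsum_minus, rsum_scal in Hrel. unfold sv. unfold Rdiv in *. lra.
Qed.

Lemma dependent_if_too_many (Act : nat -> Prop) M :
  forall n (e : nat -> nat -> R) (K : nat -> Prop),
  (forall i t, (i < n)%nat -> (t < M)%nat -> ~ Act t -> e i t = 0) ->
  (nsum M (fun t => ind (Act t)) < nsum n (fun i => ind (K i)))%nat ->
  exists c : nat -> R, (forall i, ~ K i -> c i = 0) /\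
    (exists i, (i < n)%nat /\ K i /\ c i <> 0) /\
    (forall t, (t < M)%nat -> rsum n (fun i => c i * e i t) = 0).
Proof.
  induction M as [|M IH]; intros n e K Hz Hc.
  - destruct (count_pos K n) as [i0 [Hi0 Ki0]]; [unfold nsum at 1 in Hc; simpl in Hc; lia|].
    exists (fun i => if Nat.eq_dec i i0 then 1 else 0). split; [|split].
    + intros i Ki. destruct Nat.eq_dec; [subst; tauto|reflexivity].
    + exists i0. destruct Nat.eq_dec; [|tauto]. repeat split; auto; lra.
    + intros; lia.
  - rewrite nsum_S in Hc.
    destruct (classic (exists i0, (i0 < n)%nat /\ K i0 /\ e i0 M <> 0))
      as [[i0 [Hi0 [Ki0 Hp]]]|Hno].
    + (* eliminate the pivot [i0] and recurse on the remaining vectors *)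
      assert (HA : Act M).
      { apply NNPP; intros HA. apply Hp, Hz; auto. }
      rewrite (ind_true _ HA) in Hc.
      destruct (IH n (fun i t => e i t - e i M / e i0 M * e i0 t) (fun i => K i /\ i <> i0))
        as [c' [H1 [[i [Hi [[Ki Hne] Hci]]] H3]]].
      { intros i t Hi Ht HAt. rewrite (Hz i t), (Hz i0 t); auto; try lia. unfold Rdiv; ring. }
      { pose proof (count_remove K n i0 Hi0 Ki0). lia. }
      destruct (pivot_lift n e i0 M c' Hi0 Hp H3) as [c [Hcc Hrel]].
      exists c. split; [|split; [exists i; rewrite Hcc; auto|exact Hrel]].
      intros i' Ki'. rewrite Hcc by congruence. apply H1. tauto.
    +
      assert (HM : forall i, (i < n)%nat -> K i -> e i M = 0).
      { intros i Hi Ki. apply NNPP; intros H. apply Hno; exists i; auto. }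
      assert (Hc' : (nsum M (fun t => ind (Act t)) < nsum n (fun i => ind (K i)))%nat).
      { destruct (classic (Act M)); [rewrite ind_true in Hc|rewrite ind_false in Hc]; auto; lia. }
      destruct (IH n e K) as [c [H1 [H2 H3]]]; [intros; apply Hz; auto; lia | exact Hc'|].
      exists c. split; [auto|split; [auto|]]. exact (relation_extend n e K M c H1 HM H3).
Qed.

Section MultiplicityFromBasis.

Variables (r : nat) (lam : nat -> R) (mu : R) (M : nat) (Act : nat -> Prop)
  (B : nat -> nat -> bool -> R -> R).

Definition active_combination (e : nat -> R) (f : nat -> bool -> R -> R) : Prop :=
  (forall t, (t < M)%nat -> ~ Act t -> e t = 0) /\
  forall j a x, (j < r)%nat -> 0 <= x <= elen lam j ->
    f j a x = rsum M (fun t => e t * B t j a x).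

Hypothesis basis_eig : forall t, (t < M)%nat -> Act t -> is_eigfun r lam mu (B t).
Hypothesis basis_spans : forall f, is_eigfun r lam mu f -> exists e, active_combination e f.
Hypothesis basis_indep : forall e,
  active_combination e (fun _ _ _ => 0) -> forall t, (t < M)%nat -> Act t -> e t = 0.

Lemma active_basis_independent :
  exists F, (forall i, (i < nsum M (fun t => ind (Act t)))%nat -> is_eigfun r lam mu (F i)) /\
            indep r lam (nsum M (fun t => ind (Act t))) F.
Proof.
  set (d := nsum M (fun t => ind (Act t))).
  destruct (enumerate_count Act M) as [sg [Hs Hinj]]. fold d in Hs, Hinj.
  exists (fun i => B (sg i)). split.
  - intros i Hi. apply basis_eig; apply Hs; auto.
  - intros c Hc i Hi.
    (* transport the coefficients [c] along the listing [sg] *)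
    set (e := fun t => rsum d (fun i => if Nat.eq_dec (sg i) t then c i else 0)).
    assert (He : active_combination e (fun _ _ _ => 0)).
    { split.
      - intros t Ht HA. apply rsum_zero. intros i' Hi'.
        destruct Nat.eq_dec as [E|E]; [|reflexivity].
        exfalso. apply HA. rewrite <- E. apply Hs; auto.
      - intros j a x Hj Hx. rewrite <- (Hc j a x Hj Hx).
        unfold e. rewrite (rsum_ext M _ (fun t => rsum d (fun i =>
           (if Nat.eq_dec (sg i) t then c i else 0) * B t j a x)))
          by (intros; rewrite rsum_scal_r; reflexivity).
        rewrite rsum_swap. apply rsum_ext. intros i' Hi'.
        rewrite (rsum_single M _ (sg i')).
        + destruct Nat.eq_dec; [reflexivity|tauto].
        + apply Hs; auto.
        + intros t Ht Hne. destruct Nat.eq_dec; [congruence|ring]. }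
    pose proof (basis_indep e He (sg i) (proj1 (Hs i Hi)) (proj2 (Hs i Hi))) as Hes.
    unfold e in Hes. rewrite (rsum_single d _ i) in Hes; auto.
    + destruct Nat.eq_dec; [exact Hes|tauto].
    + intros i' Hi' Hne. destruct Nat.eq_dec as [E|E]; [|reflexivity].
      exfalso; apply Hne; apply Hinj; auto.
Qed.

(** More eigenfunctions than active basis functions are dependent: their
    coefficient vectors are. *)
Lemma too_many_eigenfunctions_dependent F :
  (forall i, (i < S (nsum M (fun t => ind (Act t))))%nat -> is_eigfun r lam mu (F i)) ->
  ~ indep r lam (S (nsum M (fun t => ind (Act t)))) F.
Proof.
  set (d := nsum M (fun t => ind (Act t))). intros HF Hind.
  destruct (choice (fun i e => (i < S d)%nat -> active_combination e (F i)))
    as [E HE].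
  { intros i. destruct (Compare_dec.lt_dec i (S d)) as [Hi|Hi].
    - destruct (basis_spans (F i) (HF i Hi)) as [e He]. exists e; intros; exact He.
    - exists (fun _ => 0). intros; lia. }
  destruct (dependent_if_too_many Act M (S d) E (fun _ => True))
    as [c [_ [[i0 [Hi0 [_ Hc0]]] Hc]]].
  { intros i t Hi Ht HA. apply (proj1 (HE i Hi)); auto. }
  { rewrite count_all. fold d. lia. }
  apply Hc0, (Hind c); auto. intros j a x Hj Hx.
  rewrite (rsum_ext (S d) _ (fun i => rsum M (fun t => c i * E i t * B t j a x))).
  - rewrite rsum_swap. apply rsum_zero. intros t Ht. rewrite rsum_scal_r, Hc; [ring|auto].
  - intros i Hi. rewrite (proj2 (HE i Hi) j a x Hj Hx), <- rsum_scal.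
    apply rsum_ext; intros; ring.
Qed.

Theorem has_mult_from_basis : has_mult r lam mu (nsum M (fun t => ind (Act t))).
Proof. split; [exact active_basis_independent | exact too_many_eigenfunctions_dependent]. Qed.

End MultiplicityFromBasis.

(** * Structure of eigenfunctions on a chain of loops

    Position of the vertex [w_j] along the chain, each loop counted with
    half its length (one of its two edges). *)
Definition vertex_pos (lam : nat -> R) (j : nat) : R := rsum j (elen lam).

Lemma vertex_pos_S lam j : vertex_pos lam (S j) = vertex_pos lam j + elen lam j.
Proof. apply rsum_S. Qed.

Lemma vertex_pos_total r lam : vertex_pos lam r = rsum r lam / 2.
Proof.
  unfold vertex_pos. induction r; [unfold rsum; simpl; field|].
  rewrite !rsum_S, IHr. unfold elen; field.
Qed.

Definition sym_part (D0 : nat -> bool -> R) (j : nat) : R := (D0 j true + D0 j false) / 2.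
Definition anti_part (D0 : nat -> bool -> R) (j : nat) : R := (D0 j true - D0 j false) / 2.

Lemma outgoing_split (D0 : nat -> bool -> R) j (a : bool) :
  D0 j a = sym_part D0 j + (if a then anti_part D0 j else - anti_part D0 j).
Proof. unfold sym_part, anti_part; destruct a; field. Qed.

Section ChainStructure.

Variables (mu : R) (c c1 s s1 : R -> R).
Hypotheses (dc : forall x, is_derive c x (c1 x)) (dc1 : forall x, is_derive c1 x (- mu * c x))
  (ds : forall x, is_derive s x (s1 x)) (ds1 : forall x, is_derive s1 x (- mu * s x))
  (wronskian : forall x, c x * s1 x - c1 x * s x = 1)
  (c_0 : c 0 = 1) (s_0 : s 0 = 0) (c1_0 : c1 0 = 0) (s1_0 : s1 0 = 1)
  (c_add : forall P x, c (P + x) = c P * c x + c1 P * s x)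
  (c1_add : forall P x, c1 (P + x) = c P * c1 x + c1 P * s1 x).

Variables (r : nat) (lam : nat -> R).
Hypotheses (hr : (0 < r)%nat) (hlam : forall j, (j < r)%nat -> 0 < lam j).

Section OneEigenfunction.

Variables (f : nat -> bool -> R -> R) (D0 D1 : nat -> bool -> R).
Hypotheses
  (f_edges : forall j a, (j < r)%nat -> edge_eig mu (elen lam j) (f j a) (D0 j a) (D1 j a))
  (f_cont_loop : forall j a b, (j < r)%nat ->
     f j a 0 = f j b 0 /\ f j a (elen lam j) = f j b (elen lam j))
  (f_cont_next : forall j a b, (S j < r)%nat -> f j a (elen lam j) = f (S j) b 0)
  (f_kirchhoff : forall v, (v <= r)%nat ->
     (if Nat.ltb v r then D0 v true + D0 v false else 0)
     - (if Nat.ltb 0 v then D1 (pred v) true + D1 (pred v) false else 0) = 0).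

Lemma elen_pos j : (j < r)%nat -> 0 < elen lam j.
Proof. intros Hj. unfold elen. specialize (hlam j Hj). lra. Qed.

(** On loop [j] both edges start from the same value and differ only
    through the antisymmetric part of the outgoing derivative. *)
Lemma loop_formula j (a : bool) : (j < r)%nat ->
  (forall x, 0 <= x <= elen lam j -> f j a x =
     f j true 0 * c x + (sym_part D0 j + (if a then anti_part D0 j else - anti_part D0 j)) * s x) /\
  D1 j a = f j true 0 * c1 (elen lam j)
           + (sym_part D0 j + (if a then anti_part D0 j else - anti_part D0 j)) * s1 (elen lam j).
Proof.
  intros Hj. rewrite <- outgoing_split, (proj1 (f_cont_loop j true a Hj)).
  exact (edge_solution_formula mu c c1 s s1 dc dc1 ds ds1 wronskian c_0 s_0 c1_0 s1_0
           (elen lam j) (f j a) (D0 j a) (D1 j a) (elen_pos j Hj) (f_edges j a Hj)).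
Qed.

(** Continuity at the right end of loop [j] kills the antisymmetric part
    unless [s] vanishes there, and fixes the common end value. *)
Lemma loop_end j : (j < r)%nat ->
  anti_part D0 j * s (elen lam j) = 0 /\
  f j true (elen lam j) = f j true 0 * c (elen lam j) + sym_part D0 j * s (elen lam j).
Proof.
  intros Hj. assert (Hx : 0 <= elen lam j <= elen lam j) by (pose proof (elen_pos j Hj); lra).
  pose proof (proj1 (loop_formula j true Hj) _ Hx) as Ht.
  pose proof (proj1 (loop_formula j false Hj) _ Hx) as Hf.
  pose proof (proj2 (f_cont_loop j true false Hj)) as E. split; nra.
Qed.

Lemma loop_incoming j : (j < r)%nat ->
  D1 j true + D1 j false = 2 * (f j true 0 * c1 (elen lam j) + sym_part D0 j * s1 (elen lam j)).
Proof.
  intros Hj. rewrite (proj2 (loop_formula j true Hj)), (proj2 (loop_formula j false Hj)). ring.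
Qed.

Lemma chain_propagation j : (j < r)%nat ->
  f j true 0 = f 0%nat true 0 * c (vertex_pos lam j) /\
  sym_part D0 j = f 0%nat true 0 * c1 (vertex_pos lam j).
Proof.
  induction j as [|j IH]; intros Hj.
  - unfold vertex_pos. rewrite rsum_O, c_0, c1_0. split; [ring|].
    specialize (f_kirchhoff 0%nat ltac:(lia)).
    replace (Nat.ltb 0 r) with true in f_kirchhoff by (symmetry; apply Nat.ltb_lt; lia).
    simpl in f_kirchhoff. unfold sym_part. lra.
  - destruct (IH ltac:(lia)) as [IA IS].
    rewrite vertex_pos_S, c_add, c1_add. split.
    + rewrite <- (f_cont_next j true true Hj), (proj2 (loop_end j ltac:(lia))), IA, IS. ring.
    + specialize (f_kirchhoff (S j) ltac:(lia)).
      replace (Nat.ltb (S j) r) with true in f_kirchhoff by (symmetry; apply Nat.ltb_lt; lia).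
      replace (Nat.ltb 0 (S j)) with true in f_kirchhoff by (symmetry; apply Nat.ltb_lt; lia).
      simpl pred in f_kirchhoff. rewrite loop_incoming, IA, IS in f_kirchhoff by lia.
      unfold sym_part at 1. lra.
Qed.

Lemma chain_end : f 0%nat true 0 * c1 (vertex_pos lam r) = 0.
Proof.
  assert (Hr : r = S (pred r)) by lia.
  destruct (chain_propagation (pred r) ltac:(lia)) as [IA IS].
  specialize (f_kirchhoff r ltac:(lia)).
  rewrite Nat.ltb_irrefl in f_kirchhoff.
  replace (Nat.ltb 0 r) with true in f_kirchhoff by (symmetry; apply Nat.ltb_lt; lia).
  rewrite loop_incoming, IA, IS in f_kirchhoff by lia.
  rewrite Hr, vertex_pos_S, c1_add. lra.
Qed.

End OneEigenfunction.

Lemma chain_eigfun_structure f :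
  is_eigfun r lam mu f ->
  exists (al : R) (dl : nat -> R),
    (forall j a x, (j < r)%nat -> 0 <= x <= elen lam j ->
       f j a x = al * c (vertex_pos lam j + x) + (if a then dl j else - dl j) * s x) /\
    al * c1 (vertex_pos lam r) = 0 /\
    (forall j, (j < r)%nat -> dl j * s (elen lam j) = 0).
Proof.
  intros [D0 [D1 [He [Hc [Hc2 Hk]]]]].
  exists (f 0%nat true 0), (anti_part D0). split; [|split].
  - intros j a x Hj Hx.
    destruct (chain_propagation f D0 D1 He Hc Hc2 Hk j Hj) as [IA IS].
    rewrite (proj1 (loop_formula f D0 D1 He Hc j a Hj) x Hx), IA, IS, c_add. ring.
  - exact (chain_end f D0 D1 He Hc Hc2 Hk).
  - intros j Hj. exact (proj1 (loop_end f D0 D1 He Hc j Hj)).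
Qed.

End ChainStructure.

(** [mu = k^2 > 0]: fundamental system [cos (k x)], [sin (k x) / k].
    Rescaling the loop coefficients by [k], an eigenfunction is
    [alpha cos (k (position))] plus antisymmetric multiples of [sin (k x)]. *)
Lemma positive_eigfun_form r lam k f :
  (0 < r)%nat -> (forall j, (j < r)%nat -> 0 < lam j) -> k <> 0 ->
  is_eigfun r lam (k ^ 2) f ->
  exists (al : R) (dl : nat -> R),
    (forall j a x, (j < r)%nat -> 0 <= x <= elen lam j ->
       f j a x = al * cos (k * (vertex_pos lam j + x))
                 + (if a then dl j else - dl j) * sin (k * x)) /\
    al * sin (k * vertex_pos lam r) = 0 /\
    (forall j, (j < r)%nat -> dl j * sin (k * elen lam j) = 0).
Proof.
  intros hr hlam hk Hf.
  destruct (chain_eigfun_structure (k ^ 2) (fun x => cos (k * x)) (fun x => - k * sin (k * x))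
              (fun x => sin (k * x) / k) (fun x => cos (k * x))) with (r := r) (lam := lam) (f := f)
    as [al [dl [Hrep [Hal Hdl]]]]; auto.
  - intros x; auto_derive; [exact I|ring].
  - intros x; auto_derive; [exact I|ring].
  - intros x; auto_derive; [exact I|field; exact hk].
  - intros x; auto_derive; [exact I|field; exact hk].
  - intros x. pose proof (sin2_cos2 (k * x)) as H. unfold Rsqr in H.
    transitivity (sin (k * x) * sin (k * x) + cos (k * x) * cos (k * x)); [field; auto|lra].
  - rewrite Rmult_0_r, cos_0; reflexivity.
  - rewrite Rmult_0_r, sin_0; unfold Rdiv; ring.
  - rewrite Rmult_0_r, sin_0; ring.
  - rewrite Rmult_0_r, cos_0; reflexivity.
  - intros P x. rewrite Rmult_plus_distr_l, cos_plus. field; auto.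
  - intros P x. rewrite Rmult_plus_distr_l, sin_plus. ring.
  - exists al, (fun j => dl j / k). split; [|split].
    + intros j a x Hj Hx. rewrite Hrep by auto. destruct a; field; exact hk.
    + apply (Rmult_eq_reg_l (- k)); [rewrite Rmult_0_r, <- Hal; ring | lra].
    + intros j Hj. rewrite <- (Hdl j Hj). unfold Rdiv; ring.
Qed.

(** [mu = 0]: fundamental system [1], [x].  Eigenfunctions are constant:
    the loop coefficients vanish because [x] does not vanish at loop ends. *)
Lemma zero_eigfun_constant r lam f :
  (0 < r)%nat -> (forall j, (j < r)%nat -> 0 < lam j) ->
  is_eigfun r lam 0 f ->
  exists al : R, forall j a x, (j < r)%nat -> 0 <= x <= elen lam j -> f j a x = al.
Proof.
  intros hr hlam Hf.
  destruct (chain_eigfun_structure 0 (fun _ => 1) (fun _ => 0) (fun x => x) (fun _ => 1))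
    with (r := r) (lam := lam) (f := f) as [al [dl [Hrep [_ Hdl]]]]; auto;
    try (intros; ring).
  - intros x; apply (is_derive_const 1 x).
  - intros x; rewrite Ropp_0, Rmult_0_l; apply (is_derive_const 0 x).
  - intros x; apply (is_derive_id x).
  - intros x; rewrite Ropp_0, Rmult_0_l; apply (is_derive_const 1 x).
  - exists al. intros j a x Hj Hx. rewrite Hrep by auto.
    assert (Hd : dl j = 0).
    { destruct (Rmult_integral _ _ (Hdl j Hj)) as [|H]; [auto|].
      unfold elen in H. specialize (hlam j Hj). lra. }
    rewrite Hd. destruct a; ring.
Qed.

(** [mu = - q^2 < 0]: fundamental system [cosh (q x)], [sinh (q x) / q].
    Since [sinh] only vanishes at [0], every eigenfunction vanishes. *)
Lemma negative_eigfun_zero r lam mu f :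
  (0 < r)%nat -> (forall j, (j < r)%nat -> 0 < lam j) -> mu < 0 ->
  is_eigfun r lam mu f ->
  forall j a x, (j < r)%nat -> 0 <= x <= elen lam j -> f j a x = 0.
Proof.
  intros hr hlam hmu Hf. set (q := sqrt (- mu)).
  assert (hq : 0 < q) by (apply sqrt_lt_R0; lra).
  assert (hq2 : mu = - (q * q)) by (unfold q; rewrite sqrt_sqrt; lra).
  assert (sinh_pos : forall y, 0 < y -> 0 < sinh (q * y)).
  { intros y Hy. rewrite <- sinh_0. apply sinh_lt. nra. }
  destruct (chain_eigfun_structure mu (fun x => cosh (q * x)) (fun x => q * sinh (q * x))
              (fun x => sinh (q * x) / q) (fun x => cosh (q * x)))
    with (r := r) (lam := lam) (f := f) as [al [dl [Hrep [Hal Hdl]]]]; auto;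
    unfold cosh, sinh.
  - intros x; auto_derive; [exact I|field].
  - intros x; auto_derive; [exact I|rewrite hq2; field].
  - intros x; auto_derive; [exact I|field; lra].
  - intros x; auto_derive; [exact I|rewrite hq2; field; lra].
  - intros x. assert (E : exp (q * x) * exp (- (q * x)) = 1)
      by (rewrite <- exp_plus, Rplus_opp_r, exp_0; reflexivity).
    transitivity (exp (q * x) * exp (- (q * x))); [field; lra | exact E].
  - rewrite Rmult_0_r, Ropp_0, exp_0; field.
  - rewrite Rmult_0_r, Ropp_0, exp_0; unfold Rdiv; ring.
  - rewrite Rmult_0_r, Ropp_0, exp_0; unfold Rdiv; ring.
  - rewrite Rmult_0_r, Ropp_0, exp_0; field.
  - intros P x. rewrite Rmult_plus_distr_l, Ropp_plus_distr, !exp_plus. field; lra.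
  - intros P x. rewrite Rmult_plus_distr_l, Ropp_plus_distr, !exp_plus. field; lra.
  - intros j a x Hj Hx. rewrite Hrep by auto.
    assert (Hpos : 0 < vertex_pos lam r).
    { apply rsum_pos; auto. intros i Hi. unfold elen. specialize (hlam i Hi). lra. }
    assert (Hal0 : al = 0).
    { pose proof (sinh_pos _ Hpos). destruct (Rmult_integral _ _ Hal) as [|H0]; [auto|nra]. }
    assert (Hd : dl j = 0).
    { assert (0 < sinh (q * elen lam j) / q)
        by (apply Rdiv_lt_0_compat; auto; apply sinh_pos; unfold elen; specialize (hlam j Hj); lra).
      destruct (Rmult_integral _ _ (Hdl j Hj)) as [|H0]; [auto|lra]. }
    rewrite Hal0, Hd. destruct a; ring.
Qed.

(** * The eigenmodes of the chain

    For a frequency [k >= 0] the candidate basis consists of the global mode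
    [cos (k (position))] (index [0]) and, for every loop [j], the mode
    supported on loop [j] equal to [+sin (k x)] on one edge and [-sin (k x)]
    on the other (index [S j]).  A mode is active when it satisfies the
    vertex conditions, i.e. when [k L / 2 pi], resp. [k lam j / 2 pi], is a
    positive integer ([k = 0] for the constant mode). *)
Definition cos_mode (k : R) (lam : nat -> R) (j : nat) (a : bool) (x : R) : R :=
  cos (k * (vertex_pos lam j + x)).

Definition loop_mode (k : R) (j0 j : nat) (a : bool) (x : R) : R :=
  if Nat.eqb j j0 then (if a then sin (k * x) else - sin (k * x)) else 0.

Definition mode (k : R) (lam : nat -> R) (t : nat) : nat -> bool -> R -> R :=
  match t with O => cos_mode k lam | S j => loop_mode k j end.

Definition mode_active (k : R) (lam : nat -> R) (r : nat) (t : nat) : Prop :=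
  match t with
  | O => k = 0 \/ exists N : nat, (1 <= N)%nat /\ k * rsum r lam = 2 * PI * INR N
  | S j => exists N : nat, (1 <= N)%nat /\ k * lam j = 2 * PI * INR N
  end.

Lemma sin_zero_of_frequency k y N : k * (2 * y) = 2 * PI * INR N -> sin (k * y) = 0.
Proof.
  intros H. replace (k * y) with (PI * INR N) by lra.
  apply sin_eq_0_1. exists (Z.of_nat N). rewrite <- INR_IZR_INZ. ring.
Qed.

Lemma frequency_of_sin_zero k y : 0 < k -> 0 < y -> sin (k * y) = 0 ->
  exists N : nat, (1 <= N)%nat /\ k * (2 * y) = 2 * PI * INR N.
Proof.
  intros Hk Hy Hs. destruct (sin_eq_0_0 (k * y) Hs) as [z Hz].
  assert (Hz0 : (0 < z)%Z).
  { apply lt_IZR. pose proof PI_RGT_0. destruct (Rle_or_lt (IZR z) 0); [|auto].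
    assert (IZR z * PI <= 0) by (apply Rmult_le_0_r; lra). nra. }
  exists (Z.to_nat z). split; [lia|]. rewrite INR_IZR_INZ, Z2Nat.id by lia. lra.
Qed.

Lemma cos_mode_eig r lam k :
  (0 < r)%nat -> mode_active k lam r 0 -> is_eigfun r lam (k ^ 2) (cos_mode k lam).
Proof.
  intros hr HA.
  exists (fun j _ => - k * sin (k * (vertex_pos lam j + 0))),
         (fun j _ => - k * sin (k * (vertex_pos lam j + elen lam j))).
  assert (Hend : sin (k * vertex_pos lam r) = 0).
  { rewrite vertex_pos_total.
    destruct HA as [->|[N [_ HL]]]; [rewrite Rmult_0_l; apply sin_0|].
    apply (sin_zero_of_frequency _ _ N). rewrite <- HL. field. }
  split; [|split; [|split]].
  - intros j a Hj. unfold cos_mode.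
    apply (edge_eig_of_global (k ^ 2) (elen lam j) (fun x => cos (k * (vertex_pos lam j + x)))
             (fun x => - k * sin (k * (vertex_pos lam j + x))));
      intros x; auto_derive; try exact I; ring.
  - intros; split; reflexivity.
  - intros j a b Hj. unfold cos_mode. rewrite vertex_pos_S, Rplus_0_r. reflexivity.
  - intros v Hv. destruct v as [|v].
    + replace (Nat.ltb 0 r) with true by (symmetry; apply Nat.ltb_lt; lia). simpl.
      unfold vertex_pos. rewrite rsum_O, !Rplus_0_r, Rmult_0_r, sin_0. ring.
    + replace (Nat.ltb 0 (S v)) with true by (symmetry; apply Nat.ltb_lt; lia). simpl pred.
      rewrite <- vertex_pos_S.
      destruct (Nat.ltb (S v) r) eqn:E.
      * rewrite Rplus_0_r. ring.
      * apply Nat.ltb_ge in E. assert (S v = r) as -> by lia. rewrite Hend. ring.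
Qed.

Lemma loop_mode_eig r lam k j0 :
  mode_active k lam r (S j0) -> is_eigfun r lam (k ^ 2) (loop_mode k j0).
Proof.
  intros [N [_ HL]].
  assert (Hz : sin (k * elen lam j0) = 0).
  { apply (sin_zero_of_frequency _ _ N). rewrite <- HL. unfold elen. field. }
  assert (V0 : forall j a, loop_mode k j0 j a 0 = 0).
  { intros j a; unfold loop_mode.
    destruct (Nat.eqb j j0); [destruct a; rewrite Rmult_0_r, sin_0; ring|reflexivity]. }
  assert (Vl : forall j a, loop_mode k j0 j a (elen lam j) = 0).
  { intros j a; unfold loop_mode. destruct (Nat.eqb j j0) eqn:E; [|reflexivity].
    apply Nat.eqb_eq in E; subst. destruct a; rewrite Hz; ring. }
  exists (fun j (a : bool) => if Nat.eqb j j0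
            then (if a then k * cos (k * 0) else - (k * cos (k * 0))) else 0),
         (fun j (a : bool) => if Nat.eqb j j0
            then (if a then k * cos (k * elen lam j) else - (k * cos (k * elen lam j))) else 0).
  split; [|split; [|split]].
  - intros j a Hj. unfold loop_mode. destruct (Nat.eqb j j0); [destruct a|].
    + apply (edge_eig_of_global (k ^ 2) (elen lam j) (fun x => sin (k * x))
               (fun x => k * cos (k * x)));
        intros x; auto_derive; try exact I; ring.
    + apply (edge_eig_of_global (k ^ 2) (elen lam j) (fun x => - sin (k * x))
               (fun x => - (k * cos (k * x))));
        intros x; auto_derive; try exact I; ring.
    + apply (edge_eig_of_global (k ^ 2) (elen lam j) (fun x => 0) (fun x => 0));
        intros x; rewrite ?Rmult_0_r; apply (is_derive_const 0 x).
  - intros j a b Hj. rewrite !V0, !Vl. split; reflexivity.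
  - intros j a b Hj. rewrite V0, Vl. reflexivity.
  - intros v Hv.
    destruct (Nat.ltb v r); destruct (Nat.ltb 0 v); simpl;
    destruct (Nat.eqb v j0); destruct (Nat.eqb (pred v) j0); ring.
Qed.

Lemma mode_combination_on_loop r lam k (e : nat -> R) j (a : bool) x : (j < r)%nat ->
  rsum (S r) (fun t => e t * mode k lam t j a x)
  = e 0%nat * cos (k * (vertex_pos lam j + x))
    + e (S j) * (if a then sin (k * x) else - sin (k * x)).
Proof.
  intros Hj. rewrite rsum_shift, (rsum_single r _ j Hj).
  - simpl mode. unfold cos_mode, loop_mode. rewrite Nat.eqb_refl. reflexivity.
  - intros i Hi Hne. simpl mode. unfold loop_mode.
    replace (Nat.eqb j i) with false by (symmetry; apply Nat.eqb_neq; auto). ring.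
Qed.

(** The predicted multiplicity counts the active modes; the constant mode
    and the global oscillating modes cannot be active simultaneously. *)
Lemma pred_mult_counts_active_modes r lam k :
  pred_mult r lam k = nsum (S r) (fun t => ind (mode_active k lam r t)).
Proof.
  rewrite nsum_shift. unfold pred_mult. simpl mode_active. rewrite ind_or; [reflexivity|].
  intros [-> [N [HN HL]]]. assert (1 <= INR N) by (apply (le_INR 1); lia).
  pose proof PI_RGT_0. nra.
Qed.

Lemma active_modes_span r lam k f :
  (0 < r)%nat -> (forall j, (j < r)%nat -> 0 < lam j) -> 0 <= k ->
  is_eigfun r lam (k ^ 2) f ->
  exists e, active_combination r lam (S r) (mode_active k lam r) (mode k lam) e f.
Proof.
  intros hr hlam hk Hf. destruct (Req_dec k 0) as [->|Hk0].
  - (* [k = 0]: eigenfunctions are constant, a multiple of the constant mode *)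
    replace (0 ^ 2) with 0 in Hf by ring.
    destruct (zero_eigfun_constant r lam f hr hlam Hf) as [al Hal].
    exists (fun t => match t with O => al | S _ => 0 end). split.
    + intros [|t] Ht HA; [exfalso; apply HA; left; reflexivity|reflexivity].
    + intros j a x Hj Hx. rewrite mode_combination_on_loop, Hal by auto.
      rewrite Rmult_0_l, cos_0. ring.
  - (* [k > 0]: a nonzero coefficient forces the corresponding mode to be active *)
    assert (kp : 0 < k) by lra.
    destruct (positive_eigfun_form r lam k f hr hlam Hk0 Hf) as [al [dl [Hrep [Hal Hdl]]]].
    exists (fun t => match t with O => al | S j => dl j end). split.
    + intros [|j] Ht HA; apply NNPP; intros Hne; apply HA.
      * right. destruct (frequency_of_sin_zero k (vertex_pos lam r)) as [N [HN HE]]; auto.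
        { rewrite vertex_pos_total. apply Rdiv_lt_0_compat; [apply rsum_pos; auto|lra]. }
        { destruct (Rmult_integral _ _ Hal) as [H|H]; [exfalso; apply Hne, H|exact H]. }
        exists N. split; auto. rewrite vertex_pos_total in HE. lra.
      * destruct (frequency_of_sin_zero k (elen lam j)) as [N [HN HE]]; auto.
        { unfold elen. specialize (hlam j ltac:(lia)). lra. }
        { destruct (Rmult_integral _ _ (Hdl j ltac:(lia))) as [H|H];
            [exfalso; apply Hne, H|exact H]. }
        exists N. split; auto. unfold elen in HE. lra.
    + intros j a x Hj Hx. rewrite mode_combination_on_loop, Hrep by auto. destruct a; ring.
Qed.

(** A vanishing combination of active modes has zero loop coefficients:
    evaluate both edges of loop [j] at [x = pi / (2 k)], where the loop
    mode equals [+1] and [-1]. *)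
Lemma loop_coefficient_vanishes r lam k e j :
  0 <= k -> (j < r)%nat -> 0 < lam j ->
  active_combination r lam (S r) (mode_active k lam r) (mode k lam) e (fun _ _ _ => 0) ->
  e (S j) = 0.
Proof.
  intros hk Hj hlj [Hsupp Hsum].
  destruct (classic (mode_active k lam r (S j))) as [[N [HN HL]]|HA]; [|apply Hsupp; auto; lia].
  assert (HNr : 1 <= INR N) by (apply (le_INR 1); lia).
  pose proof PI_RGT_0.
  assert (kp : 0 < k) by (destruct (Req_dec k 0) as [E|E]; [rewrite E in HL; nra|lra]).
  set (x0 := PI / (2 * k)).
  assert (Hx0 : 0 <= x0 <= elen lam j).
  { unfold x0, elen. split; [apply Rlt_le, Rdiv_lt_0_compat; lra|].
    apply Rmult_le_reg_l with (2 * k); [lra|]. field_simplify; [|lra]. nra. }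
  assert (Hsin : sin (k * x0) = 1).
  { unfold x0. replace (k * (PI / (2 * k))) with (PI / 2) by (field; lra). apply sin_PI2. }
  pose proof (Hsum j true x0 Hj Hx0) as T. pose proof (Hsum j false x0 Hj Hx0) as F.
  rewrite mode_combination_on_loop, Hsin in T, F by auto. lra.
Qed.

Lemma active_modes_independent r lam k :
  (0 < r)%nat -> (forall j, (j < r)%nat -> 0 < lam j) -> 0 <= k -> forall e,
  active_combination r lam (S r) (mode_active k lam r) (mode k lam) e (fun _ _ _ => 0) ->
  forall t, (t < S r)%nat -> mode_active k lam r t -> e t = 0.
Proof.
  intros hr hlam hk e He [|j] Ht _.
  2:{ exact (loop_coefficient_vanishes r lam k e j hk ltac:(lia) (hlam j ltac:(lia)) He). }
  (* the global coefficient: evaluate at the first vertex *)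
  assert (H0 : 0 <= 0 <= elen lam 0) by (unfold elen; specialize (hlam 0%nat hr); lra).
  pose proof (proj2 He 0%nat true 0 hr H0) as T.
  rewrite mode_combination_on_loop, (loop_coefficient_vanishes r lam k e 0) in T; auto.
  unfold vertex_pos in T. rewrite rsum_O, Rplus_0_r, Rmult_0_r, cos_0 in T. lra.
Qed.

Theorem mainTheorem6 (r : nat) (lam : nat -> R)
  (hr : (0 < r)%nat) (hlam : forall j, (j < r)%nat -> 0 < lam j) :
  (forall mu, mu < 0 -> has_mult r lam mu 0) /\
  (forall k, 0 <= k -> has_mult r lam (k ^ 2) (pred_mult r lam k)).
Proof.
  split.
  - (* negative spectral parameter: the empty basis spans the zero space *)
    intros mu hmu.
    apply (has_mult_from_basis r lam mu 0 (fun _ => False) (fun _ _ _ _ => 0)).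
    + intros; lia.
    + intros f Hf. exists (fun _ => 0). split; [intros; lia|].
      intros j a x Hj Hx. exact (negative_eigfun_zero r lam mu f hr hlam hmu Hf j a x Hj Hx).
    + intros; lia.
  - (* nonnegative: the active modes form a basis of the eigenspace *)
    intros k hk. rewrite pred_mult_counts_active_modes.
    apply (has_mult_from_basis r lam (k ^ 2) (S r) (mode_active k lam r) (mode k lam)).
    + intros [|j] Ht HA; [apply cos_mode_eig | apply loop_mode_eig]; auto.
    + intros f Hf. exact (active_modes_span r lam k f hr hlam hk Hf).
    + exact (active_modes_independent r lam k hr hlam hk).
Qed.
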